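(* For any values of $k$, $\mu$, and $\nu$, \[ \,_{3}F_{4}\left(\tfrac{1}{2},\tfrac{\mu}{2}+\tfrac{\nu}{2}+\tfrac{1}{2},\tfrac{\mu}{2}+\tfrac{\nu}{2}+1;1,\mu+1,\nu+1,\mu+\nu+1;-k^{2}\right) = 2^{\mu+\nu}\Gamma(\mu+1)\Gamma(\nu+1)\sum_{L=0}^{\infty}\frac{(-1)^{2L}k^{4L}2^{-8L-\mu-\nu}\left(2-\delta_{L0}\right)}{(L!)^{2}\Gamma(L+\mu+1)\Gamma(L+\nu+1)} \,_{1}F_{2}\left(L+\tfrac{1}{2};2L+1,L+\mu+1;-\tfrac{k^{2}}{4}\right)\,_{1}F_{2}\left(L+\tfrac{1}{2};2L+1,L+\nu+1;-\tfrac{k^{2}}{4}\right). \]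
   Context: $\,_{p}F_{q}(a_1,\dots,a_p;b_1,\dots,b_q;z)=\sum_{n\ge0}\frac{(a_1)_n\cdots(a_p)_n}{(b_1)_n\cdots(b_q)_n}\frac{z^n}{n!}$ is the generalized hypergeometric function, with $(c)_n=\Gamma(c+n)/\Gamma(c)$ the Pochhammer symbol. $\delta_{L0}$ is the Kronecker delta (equal to $1$ if $L=0$ and $0$ otherwise). *)

From Stdlib Require Import Reals List Arith Factorial.
Import ListNotations.
From Coquelicot Require Import Coquelicot.
Open Scope R_scope.

Fixpoint poch (c : R) (n : nat) : R :=
  match n with
  | O => 1
  | S m => poch c m * (c + INR m)
  end.

Definition poch_list (l : list R) (n : nat) : R :=
  fold_right (fun c acc => poch c n * acc) 1 l.

Definition hyp_term (as_ bs : list R) (z : R) (n : nat) : R :=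
  poch_list as_ n / poch_list bs n * z ^ n / INR (fact n).

(* pFq(as; bs; z) = sum_{n>=0} (a_1)_n...(a_p)_n / ((b_1)_n...(b_q)_n) z^n/n!.
   (Here all series used are entire, so Series is the actual sum.) *)
Definition hypergeom (as_ bs : list R) (z : R) : R :=
  Series (hyp_term as_ bs z).

(* Euler's Gamma function on the reals, via the Gauss/Euler limit formula
   Gamma(x) = lim_{n->oo} n! n^x / (x (x+1) ... (x+n)),
   valid for every real x that is not a nonpositive integer. *)
Definition Gamma (x : R) : R :=
  real (Lim_seq (fun n => INR (fact n) * Rpower (INR n) x / poch x (S n))).

Definition not_nonpos_int (x : R) : Prop := forall n : nat, x <> - INR n.

Definition delta0 (L : nat) : R := match L with O => 1 | S _ => 0 end.

From Stdlib Require Import Reals List Arith Factorial Lia Lra.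
From Coquelicot Require Import Coquelicot.
Open Scope R_scope.

(* Expand both 1F2 factors of the L-th summand as power series in w = -k^2/4.  With
   a = mu + 1 and b = nu + 1, the n-th coefficient of the L-th summand is a sum over P of
   C(2P, P+L) C(2(n-P), n-P+L) (w/4)^n / (P! (a)_P (n-P)! (b)_(n-P)).  Summing over L
   first, the Vandermonde convolution
     sum_L (2 - delta_L0) C(2P, P+L) C(2Q, Q+L) = C(2(P+Q), P+Q)
   removes L, and a second Vandermonde convolution
     sum_P 1 / (P! (a)_P (n-P)! (b)_(n-P)) = (a+b+n-1)_n / (n! (a)_n (b)_n)
   together with the duplication formula gives the n-th term of the 3F4.  Exchanging the
   two summations is legitimate because the coefficients are dominated by a series that
   stays summable after weighting by n + 1.  The Gamma quotients reduce to Pochhammer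
   symbols once Gamma (x + 1) = x Gamma (x) is derived from the Gauss limit defining Gamma. *)

Lemma sum_f_R0_ge_term a N j : (forall i, 0 <= a i) -> (j <= N)%nat -> a j <= sum_f_R0 a N.
Proof.
  intros Ha Hj; induction N as [|N IH].
  - replace j with 0%nat by lia; simpl; lra.
  - rewrite tech5; destruct (Nat.eq_dec j (S N)) as [->|Hne].
    + pose proof (cond_pos_sum a N Ha); lra.
    + pose proof (Ha (S N)); assert (a j <= sum_f_R0 a N) by (apply IH; lia); lra.
Qed.

Lemma sum_f_R0_overlap a Q P :
  sum_f_R0 a (Q + P) = sum_f_R0 a Q + sum_f_R0 (fun L => a (Q + L)%nat) P - a Q.
Proof.
  induction P as [|P IH]; [simpl; rewrite Nat.add_0_r; ring|].
  rewrite Nat.add_succ_r, !tech5, IH, Nat.add_succ_r; ring.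
Qed.

Lemma sum_f_R0_zero_tail a N M :
  (N <= M)%nat -> (forall i, (N < i)%nat -> a i = 0) -> sum_f_R0 a M = sum_f_R0 a N.
Proof.
  intros HNM Ha; induction M as [|M IH].
  - replace N with 0%nat by lia; reflexivity.
  - destruct (Nat.eq_dec N (S M)) as [->|Hne]; [reflexivity|].
    rewrite tech5, IH, Ha by lia; ring.
Qed.

Lemma sum_f_R0_delta0 f N : sum_f_R0 (fun L => delta0 L * f L) N = f 0%nat.
Proof. induction N as [|N IH]; [simpl; ring|]; rewrite tech5, IH; cbn [delta0]; ring. Qed.

Lemma sum_f_R0_switch (u : nat -> nat -> R) m n :
  sum_f_R0 (fun i => sum_f_R0 (u i) n) m = sum_f_R0 (fun j => sum_f_R0 (fun i => u i j) m) n.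
Proof.
  rewrite <- !sum_n_Reals.
  rewrite (sum_n_ext _ (fun i => sum_n (u i) n)) by (intros; symmetry; apply sum_n_Reals).
  rewrite (sum_n_ext (fun j => sum_f_R0 _ m) (fun j => sum_n (fun i => u i j) m))
    by (intros; symmetry; apply sum_n_Reals).
  apply sum_n_switch.
Qed.

Lemma sum_f_R0_triangular_switch (c : nat -> nat -> R) N :
  (forall L n, (n < L)%nat -> c L n = 0) ->
  sum_f_R0 (fun n => sum_f_R0 (fun L => c L n) n) N = sum_f_R0 (fun L => sum_f_R0 (c L) N) N.
Proof.
  intros Hc.
  rewrite (sum_eq _ (fun n => sum_f_R0 (fun L => c L n) N)).
  2:{ intros n Hn; symmetry; apply sum_f_R0_zero_tail; [exact Hn|intros; apply Hc; lia]. }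
  symmetry; apply sum_f_R0_switch.
Qed.

(** * Pochhammer symbols *)

Lemma poch_S c m : poch c (S m) = poch c m * (c + INR m).
Proof. reflexivity. Qed.

Lemma poch_S_l c m : poch c (S m) = c * poch (c + 1) m.
Proof.
  induction m as [|m IH]; [simpl; ring|].
  rewrite poch_S, IH, poch_S, S_INR. ring.
Qed.

Lemma poch_add c p m : poch c (p + m) = poch c p * poch (c + INR p) m.
Proof.
  induction m as [|m IH]; [rewrite Nat.add_0_r; simpl; ring|].
  rewrite Nat.add_succ_r, !poch_S, IH, plus_INR. ring.
Qed.

Lemma poch_gt0 c m : 0 < c -> 0 < poch c m.
Proof.
  intros Hc; induction m as [|m IH]; simpl; [lra|].
  pose proof (pos_INR m); apply Rmult_lt_0_compat; lra.
Qed.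

Lemma poch_le c d m : 0 < c -> c <= d -> poch c m <= poch d m.
Proof.
  intros Hc Hcd; induction m as [|m IH]; simpl; [lra|].
  pose proof (poch_gt0 c m Hc); pose proof (pos_INR m).
  apply Rmult_le_compat; lra.
Qed.

Lemma poch_eq0 c j m : c + INR j = 0 -> (j < m)%nat -> poch c m = 0.
Proof.
  intros Hj Hjm; induction m as [|m IH]; [lia|].
  rewrite poch_S; destruct (Nat.eq_dec j m) as [->|Hne].
  - rewrite Hj; ring.
  - rewrite IH by lia; ring.
Qed.

Lemma not_nonpos_int_neq0 c j : not_nonpos_int c -> c + INR j <> 0.
Proof. intros Hc E; apply (Hc j); lra. Qed.

Lemma not_nonpos_int_plus_INR c L : not_nonpos_int c -> not_nonpos_int (c + INR L).
Proof. intros Hc n E; apply (Hc (n + L)%nat); rewrite plus_INR; lra. Qed.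

Lemma not_nonpos_int_gt0 c : 0 < c -> not_nonpos_int c.
Proof. intros Hc n E; pose proof (pos_INR n); lra. Qed.

Lemma poch_neq0 c m : not_nonpos_int c -> poch c m <> 0.
Proof.
  intros Hc; induction m as [|m IH]; simpl; [lra|].
  apply Rmult_integral_contrapositive; split; auto using not_nonpos_int_neq0.
Qed.

Lemma fact_add_poch k m : INR (fact (k + m)) = INR (fact k) * poch (INR k + 1) m.
Proof.
  induction m as [|m IH]; [rewrite Nat.add_0_r; simpl; ring|].
  rewrite Nat.add_succ_r, fact_simpl, mult_INR, IH, poch_S, S_INR, plus_INR. ring.
Qed.

Lemma poch_1 m : poch 1 m = INR (fact m).
Proof. pose proof (fact_add_poch 0 m) as E; simpl in E; rewrite Rplus_0_l in E; lra. Qed.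

Lemma poch_half_fact n : poch (1/2) n * 4 ^ n * INR (fact n) = INR (fact (2 * n)).
Proof.
  induction n as [|n IH]; [simpl; ring|].
  replace (2 * S n)%nat with (S (S (2 * n))) by lia.
  rewrite !fact_simpl, !mult_INR, <- IH, poch_S, !S_INR, mult_INR. simpl. field.
Qed.

Lemma poch_duplication c n : poch c n * poch (c + 1/2) n * 4 ^ n = poch (2 * c) (2 * n).
Proof.
  induction n as [|n IH]; [simpl; ring|].
  replace (2 * S n)%nat with (S (S (2 * n))) by lia.
  rewrite !poch_S, <- IH, !S_INR, !mult_INR. simpl. field.
Qed.

(** * Binomial coefficients *)

Definition gbinom (x : R) (m : nat) : R := poch (x - INR m + 1) m / INR (fact m).

Lemma gbinom_0 x : gbinom x 0 = 1.
Proof. unfold gbinom; simpl; field. Qed.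

Lemma gbinom_S x m : INR (S m) * gbinom x (S m) = (x - INR m) * gbinom x m.
Proof.
  unfold gbinom; rewrite poch_S_l, fact_simpl, mult_INR.
  replace (x - INR (S m) + 1 + 1) with (x - INR m + 1) by (rewrite S_INR; ring).
  replace (x - INR (S m) + 1) with (x - INR m) by (rewrite S_INR; ring).
  pose proof (INR_fact_lt_0 m); pose proof (pos_INR m); rewrite S_INR.
  field; lra.
Qed.

Lemma gbinom_vandermonde x y n :
  sum_f_R0 (fun p => gbinom x (n - p) * gbinom y p) n = gbinom (x + y) n.
Proof.
  induction n as [|n IH]; [simpl; rewrite !gbinom_0; ring|].
  apply (Rmult_eq_reg_l (INR (S n))); [|apply not_0_INR; lia].
  rewrite gbinom_S, <- IH, (scal_sum _ n).
  (* split the weight [S n] as [(S n - p) + p] and lower each factor by [gbinom_S] *)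
  transitivity (sum_f_R0 (fun p => INR (S n - p) * gbinom x (S n - p) * gbinom y p) (S n)
                + sum_f_R0 (fun p => gbinom x (S n - p) * (INR p * gbinom y p)) (S n)).
  { rewrite <- plus_sum, scal_sum; apply sum_eq; intros p Hp; rewrite minus_INR by lia; ring. }
  rewrite tech5, Nat.sub_diag, (decomp_sum _ (S n)) by lia; simpl pred.
  simpl (INR 0); rewrite Rmult_0_l, Rmult_0_l, Rplus_0_r, Rmult_0_l, Rmult_0_r, Rplus_0_l.
  rewrite <- plus_sum; apply sum_eq; intros p Hp.
  replace (S n - p)%nat with (S (n - p)) by lia.
  replace (S n - S p)%nat with (n - p)%nat by lia.
  transitivity ((INR (S (n - p)) * gbinom x (S (n - p))) * gbinom y p
                + gbinom x (n - p) * (INR (S p) * gbinom y (S p))); [ring|].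
  rewrite gbinom_S, gbinom_S, minus_INR by lia; ring.
Qed.

Lemma gbinom_nat A j : (j <= A)%nat -> gbinom (INR A) j = Binomial.C A j.
Proof.
  intros Hj; unfold gbinom, Binomial.C.
  replace (INR A - INR j + 1) with (INR (A - j) + 1) by (rewrite minus_INR by lia; ring).
  pose proof (fact_add_poch (A - j) j) as E; replace (A - j + j)%nat with A in E by lia.
  pose proof (INR_fact_lt_0 j); pose proof (INR_fact_lt_0 (A - j)).
  rewrite E; field; lra.
Qed.

Lemma gbinom_nat_gt A j : (A < j)%nat -> gbinom (INR A) j = 0.
Proof.
  intros Hj; unfold gbinom; rewrite (poch_eq0 _ (j - A - 1)); [unfold Rdiv; ring| |lia].
  rewrite !minus_INR by lia; simpl; ring.
Qed.

Lemma gbinom_nat_sym A j : (j <= A)%nat -> gbinom (INR A) (A - j) = gbinom (INR A) j.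
Proof. intros Hj; rewrite !gbinom_nat by lia; symmetry; apply pascal_step1; lia. Qed.

Lemma binomial_C_gt0 n i : 0 < Binomial.C n i.
Proof.
  unfold Binomial.C; pose proof (INR_fact_lt_0 n); pose proof (INR_fact_lt_0 i);
  pose proof (INR_fact_lt_0 (n - i)).
  apply Rdiv_lt_0_compat; [|apply Rmult_lt_0_compat]; lra.
Qed.

Lemma gbinom_nat_ge0 A j : 0 <= gbinom (INR A) j.
Proof.
  destruct (le_lt_dec j A).
  - rewrite gbinom_nat by lia; apply Rlt_le, binomial_C_gt0.
  - rewrite gbinom_nat_gt by lia; lra.
Qed.

Lemma gbinom_nat_le_pow2 A j : gbinom (INR A) j <= 2 ^ A.
Proof.
  destruct (le_lt_dec j A).
  - rewrite gbinom_nat by lia.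
    replace 2 with (1 + 1) by ring; rewrite binomial.
    replace (Binomial.C A j) with (Binomial.C A j * 1 ^ j * 1 ^ (A - j)) by (rewrite !pow1; ring).
    apply (sum_f_R0_ge_term (fun i => Binomial.C A i * 1 ^ i * 1 ^ (A - i))); [|lia].
    intros i; rewrite !pow1, !Rmult_1_r; apply Rlt_le, binomial_C_gt0.
  - rewrite gbinom_nat_gt by lia; apply pow_le; lra.
Qed.

Definition cbinom (P L : nat) : R := gbinom (INR (2 * P)) (P + L).

Lemma cbinom_gt P L : (P < L)%nat -> cbinom P L = 0.
Proof. intros H; apply gbinom_nat_gt; lia. Qed.

Lemma cbinom_ge0 P L : 0 <= cbinom P L.
Proof. apply gbinom_nat_ge0. Qed.

Lemma cbinom_sym P L : (L <= P)%nat -> gbinom (INR (2 * P)) (P - L) = cbinom P L.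
Proof.
  intros H; unfold cbinom; rewrite <- gbinom_nat_sym by lia; f_equal; lia.
Qed.

Lemma cbinom_le_pow4 P L : cbinom P L <= 4 ^ P.
Proof.
  replace 4 with (2 ^ 2) by ring; rewrite <- pow_mult; apply gbinom_nat_le_pow2.
Qed.

Lemma cbinom_convolution P Q :
  sum_f_R0 (fun L => (2 - delta0 L) * (cbinom P L * cbinom Q L)) (Q + P)
  = gbinom (INR (2 * (Q + P))) (Q + P).
Proof.
  set (f := fun L => cbinom P L * cbinom Q L).
  assert (EP : sum_f_R0 f (Q + P) = sum_f_R0 f P).
  { apply sum_f_R0_zero_tail; [lia|]; intros i Hi; unfold f; rewrite cbinom_gt by lia; ring. }
  assert (EQ : sum_f_R0 f (Q + P) = sum_f_R0 f Q).
  { apply sum_f_R0_zero_tail; [lia|]; intros i Hi; unfold f; rewrite (cbinom_gt Q) by lia; ring. }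
  rewrite (sum_eq _ (fun L => f L * 2 - delta0 L * f L)) by (intros; unfold f; ring).
  rewrite minus_sum, <- scal_sum, sum_f_R0_delta0, EP.
  (* Vandermonde for C(2P + 2Q, Q + P), split at the central index j = Q *)
  replace (INR (2 * (Q + P))) with (INR (2 * P) + INR (2 * Q))
    by (rewrite <- plus_INR; f_equal; lia).
  rewrite <- gbinom_vandermonde, sum_f_R0_overlap.
  assert (Low : sum_f_R0 (fun j => gbinom (INR (2 * P)) (Q + P - j) * gbinom (INR (2 * Q)) j) Q
                = sum_f_R0 f Q).
  { rewrite <- sum_f_R0_skip; apply sum_eq; intros L HL; unfold f.
    replace (Q + P - (Q - L))%nat with (P + L)%nat by lia; rewrite cbinom_sym by lia.
    reflexivity. }
  assert (High : sum_f_R0 (fun L => gbinom (INR (2 * P)) (Q + P - (Q + L))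
                                    * gbinom (INR (2 * Q)) (Q + L)) P = sum_f_R0 f P).
  { apply sum_eq; intros L HL; unfold f.
    replace (Q + P - (Q + L))%nat with (P - L)%nat by lia; rewrite cbinom_sym by lia.
    reflexivity. }
  rewrite Low, High, <- EQ, EP; unfold f, cbinom.
  replace (Q + P - Q)%nat with (P + 0)%nat by lia; rewrite !Nat.add_0_r.
  lra.
Qed.

Lemma gbinom_shift_poch c n p : (p <= n)%nat ->
  gbinom (c + INR n - 1) (n - p) = poch (c + INR p) (n - p) / INR (fact (n - p)).
Proof.
  intros Hp; unfold gbinom; f_equal; f_equal; rewrite minus_INR by lia; ring.
Qed.

Lemma sum_inv_fact_poch a b n : not_nonpos_int a -> not_nonpos_int b ->
  sum_f_R0 (fun p => / (INR (fact p) * poch a p * INR (fact (n - p)) * poch b (n - p))) n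
  = poch (a + b + INR n - 1) n / (INR (fact n) * poch a n * poch b n).
Proof.
  intros Ha Hb.
  pose proof (poch_neq0 a n Ha); pose proof (poch_neq0 b n Hb); pose proof (INR_fact_lt_0 n).
  (* each summand is a product of two binomial coefficients, up to the factor (a)_n (b)_n *)
  transitivity (sum_f_R0 (fun p => gbinom (a + INR n - 1) (n - p) * gbinom (b + INR n - 1) p) n
                / (poch a n * poch b n)).
  - unfold Rdiv; rewrite Rmult_comm, scal_sum; apply sum_eq; intros p Hp.
    rewrite gbinom_shift_poch by lia.
    replace (gbinom (b + INR n - 1) p) with (gbinom (b + INR n - 1) (n - (n - p)))
      by (f_equal; lia).
    rewrite gbinom_shift_poch by lia; replace (n - (n - p))%nat with p by lia.
    pose proof (poch_add a p (n - p)) as Ea; replace (p + (n - p))%nat with n in Ea by lia.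
    pose proof (poch_add b (n - p) p) as Eb; replace (n - p + p)%nat with n in Eb by lia.
    rewrite Ea, Eb.
    pose proof (poch_neq0 a p Ha); pose proof (poch_neq0 b (n - p) Hb).
    pose proof (poch_neq0 _ (n - p) (not_nonpos_int_plus_INR a p Ha)).
    pose proof (poch_neq0 _ p (not_nonpos_int_plus_INR b (n - p) Hb)).
    pose proof (INR_fact_lt_0 p); pose proof (INR_fact_lt_0 (n - p)).
    field; repeat split; lra.
  - rewrite gbinom_vandermonde; unfold gbinom.
    replace (a + INR n - 1 + (b + INR n - 1) - INR n + 1) with (a + b + INR n - 1) by ring.
    field; repeat split; lra.
Qed.

(** * Real powers and the Gauss limit formula for Gamma *)

Lemma ln_le_sub1 z : 0 < z -> ln z <= z - 1.
Proof. intros Hz; pose proof (exp_ineq1_le (ln z)); rewrite exp_ln in *; lra. Qed.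

Lemma Rpower_ge_1_plus x y : 1 + y * ln x <= Rpower x y.
Proof. apply exp_ineq1_le. Qed.

Lemma Rpower_le_bernoulli x y : 0 < x -> 0 <= y <= 1 -> Rpower x y <= 1 + y * (x - 1).
Proof.
  intros Hx Hy; set (c := 1 + y * (x - 1)).
  assert (Hc : 0 < c) by (unfold c; nra).
  (* weighted sum of [ln t <= t - 1] at [t = x / c] and [t = 1 / c] *)
  pose proof (ln_le_sub1 (x / c) ltac:(apply Rdiv_lt_0_compat; lra)) as E1.
  pose proof (ln_le_sub1 (1 / c) ltac:(apply Rdiv_lt_0_compat; lra)) as E2.
  rewrite ln_div in E1, E2 by lra; rewrite ln_1 in E2.
  assert (E3 : y * (x / c - 1) + (1 - y) * (1 / c - 1) = 0) by (unfold c in *; field; lra).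
  assert (y * (ln x - ln c) <= y * (x / c - 1)) by (apply Rmult_le_compat_l; lra).
  assert ((1 - y) * (0 - ln c) <= (1 - y) * (1 / c - 1)) by (apply Rmult_le_compat_l; lra).
  unfold Rpower; rewrite <- (exp_ln c) by exact Hc.
  destruct (Req_dec (y * ln x) (ln c)) as [->|Hne]; [lra|].
  apply Rlt_le, exp_increasing; lra.
Qed.

Definition gauss_seq (x : R) (n : nat) : R := INR (fact n) * Rpower (INR n) x / poch x (S n).

Lemma Gamma_eq_lim x l : is_lim_seq (gauss_seq x) l -> Gamma x = l.
Proof.
  intros H; unfold Gamma; change (real (Lim_seq (gauss_seq x)) = l).
  rewrite (is_lim_seq_unique _ _ H); reflexivity.
Qed.

Lemma is_lim_seq_INR_shift_div c : is_lim_seq (fun n => (INR n + c) / INR n) 1.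
Proof.
  apply (is_lim_seq_ext_loc (fun n => 1 + c * / INR n)).
  - exists 1%nat; intros n Hn; assert (0 < INR n) by (apply lt_0_INR; lia); field; lra.
  - replace (Finite 1) with (Finite (1 + c * 0)) by (f_equal; ring).
    apply is_lim_seq_plus'; [apply is_lim_seq_const|].
    apply is_lim_seq_mult'; [apply is_lim_seq_const|].
    replace (Finite 0) with (Rbar_inv p_infty) by reflexivity.
    apply is_lim_seq_inv; [apply is_lim_seq_INR|discriminate].
Qed.

Section GaussShift.

Variable x : R.
Hypothesis Hx : not_nonpos_int x.

Let Hx0 : x <> 0.
Proof. pose proof (not_nonpos_int_neq0 x 0 Hx) as H; rewrite Rplus_0_r in H; exact H. Qed.

Let shift_neq0 n : INR n + (x + 1) <> 0.
Proof. pose proof (not_nonpos_int_neq0 x (S n) Hx); rewrite S_INR in *; lra. Qed.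

Lemma gauss_seq_succ n : (0 < n)%nat ->
  gauss_seq (x + 1) n * ((INR n + (x + 1)) / INR n) = x * gauss_seq x n.
Proof.
  intros Hn; unfold gauss_seq; assert (0 < INR n) by (apply lt_0_INR; lia).
  rewrite Rpower_plus, Rpower_1 by exact H.
  rewrite (poch_S_l x n), (poch_S (x + 1) n).
  pose proof (poch_neq0 (x + 1) n (not_nonpos_int_plus_INR x 1 Hx)).
  pose proof (shift_neq0 n).
  field; repeat split; lra.
Qed.

Lemma is_lim_seq_gauss_succ (l : R) :
  is_lim_seq (gauss_seq x) l -> is_lim_seq (gauss_seq (x + 1)) (x * l).
Proof.
  intros H.
  apply (is_lim_seq_ext_loc (fun n => x * gauss_seq x n / ((INR n + (x + 1)) / INR n))).
  - exists 1%nat; intros n Hn; rewrite <- gauss_seq_succ by lia.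
    assert (0 < INR n) by (apply lt_0_INR; lia); field; auto with real.
  - replace (x * l) with (x * l / 1) by field.
    apply is_lim_seq_div'; [apply is_lim_seq_mult'; [apply is_lim_seq_const|exact H]|
                            apply is_lim_seq_INR_shift_div|lra].
Qed.

Lemma is_lim_seq_gauss_pred (l : R) :
  is_lim_seq (gauss_seq (x + 1)) l -> is_lim_seq (gauss_seq x) (l / x).
Proof.
  intros H.
  apply (is_lim_seq_ext_loc (fun n => gauss_seq (x + 1) n * ((INR n + (x + 1)) / INR n) / x)).
  - exists 1%nat; intros n Hn; rewrite gauss_seq_succ by lia; field; exact Hx0.
  - replace (l / x) with (l * 1 / x) by (field; exact Hx0).
    apply is_lim_seq_div'; [apply is_lim_seq_mult'; [exact H|apply is_lim_seq_INR_shift_div]|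
                            apply is_lim_seq_const|exact Hx0].
Qed.

End GaussShift.

Section GaussUnitInterval.

Variable y : R.
Hypothesis Hy : 0 < y <= 1.

Lemma gauss_seq_gt0 n : 0 < gauss_seq y n.
Proof.
  unfold gauss_seq; apply Rdiv_lt_0_compat; [|apply poch_gt0; lra].
  apply Rmult_lt_0_compat; [apply INR_fact_lt_0|apply exp_pos].
Qed.

Lemma gauss_seq_S n : (0 < n)%nat ->
  gauss_seq y (S n) = gauss_seq y n * (INR (S n) * Rpower (INR (S n) / INR n) y / (y + INR (S n))).
Proof.
  intros Hn; unfold gauss_seq; assert (0 < INR n) by (apply lt_0_INR; lia).
  replace (Rpower (INR (S n)) y) with (Rpower (INR n) y * Rpower (INR (S n) / INR n) y).
  2:{ rewrite Rpower_mult_distr by (try apply Rdiv_lt_0_compat; auto using lt_0_INR with arith).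
      f_equal; field; lra. }
  rewrite fact_simpl, mult_INR, (poch_S y (S n)).
  pose proof (poch_gt0 y (S n) ltac:(lra)); pose proof (pos_INR (S n)).
  field; lra.
Qed.

Lemma gauss_seq_le_S n : (0 < n)%nat -> gauss_seq y n <= gauss_seq y (S n).
Proof.
  intros Hn; rewrite gauss_seq_S by exact Hn.
  pose proof (gauss_seq_gt0 n); assert (0 < INR n) by (apply lt_0_INR; lia); rewrite S_INR in *.
  assert (Hln : 1 / (INR n + 1) <= ln ((INR n + 1) / INR n)).
  { pose proof (ln_le_sub1 (INR n / (INR n + 1)) ltac:(apply Rdiv_lt_0_compat; lra)) as E.
    rewrite ln_div in E by lra; rewrite ln_div by lra.
    replace (INR n / (INR n + 1) - 1) with (- (1 / (INR n + 1))) in E by (field; lra); lra. }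
  pose proof (Rpower_ge_1_plus ((INR n + 1) / INR n) y).
  assert (y * (1 / (INR n + 1)) <= y * ln ((INR n + 1) / INR n)) by (apply Rmult_le_compat_l; lra).
  assert (1 <= (INR n + 1) * Rpower ((INR n + 1) / INR n) y / (y + (INR n + 1))).
  { apply (Rmult_le_reg_r (y + (INR n + 1))); [lra|].
    unfold Rdiv; rewrite Rmult_assoc, Rinv_l, Rmult_1_l, Rmult_1_r by lra.
    replace (y + (INR n + 1)) with ((INR n + 1) * (1 + y * (1 / (INR n + 1)))) by (field; lra).
    apply Rmult_le_compat_l; lra. }
  nra.
Qed.

Let gauss_upper (n : nat) : R := gauss_seq y n * ((INR n + y) / INR n).

Lemma gauss_upper_S_le n : (0 < n)%nat -> gauss_upper (S n) <= gauss_upper n.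
Proof.
  intros Hn; unfold gauss_upper; rewrite gauss_seq_S by exact Hn.
  pose proof (gauss_seq_gt0 n); assert (0 < INR n) by (apply lt_0_INR; lia).
  assert (Ht : 0 < INR (S n) / INR n) by (apply Rdiv_lt_0_compat; [apply lt_0_INR|]; lia || lra).
  pose proof (Rpower_le_bernoulli _ y Ht ltac:(lra)) as Hbern.
  replace (gauss_seq y n * (INR (S n) * Rpower (INR (S n) / INR n) y / (y + INR (S n)))
           * ((INR (S n) + y) / INR (S n)))
    with (gauss_seq y n * Rpower (INR (S n) / INR n) y) by (rewrite S_INR; field; lra).
  apply Rmult_le_compat_l; [lra|].
  replace ((INR n + y) / INR n) with (1 + y * (INR (S n) / INR n - 1))
    by (rewrite S_INR; field; lra).
  exact Hbern.
Qed.

Lemma gauss_seq_le_upper n : (0 < n)%nat -> gauss_seq y n <= gauss_upper n.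
Proof.
  intros Hn; unfold gauss_upper; pose proof (gauss_seq_gt0 n).
  assert (0 < INR n) by (apply lt_0_INR; lia).
  assert (1 <= (INR n + y) / INR n)
    by (apply (Rmult_le_reg_r (INR n)); [lra|]; unfold Rdiv; rewrite Rmult_assoc, Rinv_l; lra).
  nra.
Qed.

Lemma is_lim_seq_gauss_unit_interval : exists l, 0 < l /\ is_lim_seq (gauss_seq y) l.
Proof.
  set (s := fun n => gauss_seq y (S n)).
  assert (Hincr : forall n, s n <= s (S n)) by (intros; apply gauss_seq_le_S; lia).
  assert (Hbound : forall n, s n <= gauss_upper 1).
  { intros n; eapply Rle_trans; [apply gauss_seq_le_upper; lia|].
    induction n as [|n IH]; [lra|].
    eapply Rle_trans; [apply gauss_upper_S_le; lia|exact IH]. }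
  destruct (ex_finite_lim_seq_incr s _ Hincr Hbound) as [l Hl].
  assert (Hge : forall n, s 0%nat <= s n).
  { induction n as [|n IH]; [lra|]; eapply Rle_trans; [apply IH|apply Hincr]. }
  pose proof (is_lim_seq_le (fun _ => s 0%nat) s (s 0%nat) l Hge (is_lim_seq_const _) Hl).
  exists l; split; [pose proof (gauss_seq_gt0 1); unfold s in *; simpl in *; lra|].
  apply is_lim_seq_incr_1, Hl.
Qed.

End GaussUnitInterval.

Definition gauss_cvg (x : R) : Prop := exists l, l <> 0 /\ is_lim_seq (gauss_seq x) l.

Lemma gauss_cvg_plus_INR y m : 0 < y -> gauss_cvg y -> gauss_cvg (y + INR m).
Proof.
  intros Hy Hc; induction m as [|m [l [Hl Hlim]]]; [simpl; rewrite Rplus_0_r; exact Hc|].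
  pose proof (pos_INR m).
  exists ((y + INR m) * l); split; [apply Rmult_integral_contrapositive; split; lra|].
  rewrite S_INR, <- Rplus_assoc.
  apply is_lim_seq_gauss_succ; [apply not_nonpos_int_gt0; lra|exact Hlim].
Qed.

Lemma gauss_cvg_minus_INR x m : not_nonpos_int x -> gauss_cvg (x + INR m) -> gauss_cvg x.
Proof.
  revert x; induction m as [|m IH]; intros x Hx Hc.
  { simpl in Hc; rewrite Rplus_0_r in Hc; exact Hc. }
  destruct (IH (x + 1) (not_nonpos_int_plus_INR x 1 Hx)) as [l [Hl Hlim]].
  { rewrite S_INR in Hc; replace (x + 1 + INR m) with (x + (INR m + 1)) by ring; exact Hc. }
  pose proof (not_nonpos_int_neq0 x 0 Hx) as Hx0; rewrite Rplus_0_r in Hx0.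
  exists (l / x); split.
  { apply Rmult_integral_contrapositive; split; auto using Rinv_neq_0_compat. }
  apply is_lim_seq_gauss_pred; assumption.
Qed.

Lemma gauss_cvg_all x : not_nonpos_int x -> gauss_cvg x.
Proof.
  intros Hx; destruct (Rlt_or_le 0 x) as [Hpos|Hneg].
  - destruct (nfloor1_ex x Hpos) as [n Hn].
    replace x with ((x - INR n) + INR n) by ring.
    apply gauss_cvg_plus_INR; [lra|].
    destruct (is_lim_seq_gauss_unit_interval (x - INR n) ltac:(lra)) as [l [Hl Hlim]].
    exists l; split; [lra|exact Hlim].
  - destruct (nfloor_ex (- x) ltac:(lra)) as [n Hn].
    apply (gauss_cvg_minus_INR x (S n) Hx).
    assert (Hy : 0 < x + INR (S n) <= 1) by (rewrite S_INR; lra).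
    destruct (is_lim_seq_gauss_unit_interval _ Hy) as [l [Hl Hlim]].
    exists l; split; [lra|exact Hlim].
Qed.

Lemma Gamma_neq0 x : not_nonpos_int x -> Gamma x <> 0.
Proof.
  intros Hx; destruct (gauss_cvg_all x Hx) as [l [Hl Hlim]].
  rewrite (Gamma_eq_lim x l Hlim); exact Hl.
Qed.

Lemma Gamma_succ x : not_nonpos_int x -> Gamma (x + 1) = x * Gamma x.
Proof.
  intros Hx; destruct (gauss_cvg_all x Hx) as [l [_ Hlim]].
  rewrite (Gamma_eq_lim _ _ (is_lim_seq_gauss_succ x Hx l Hlim)), (Gamma_eq_lim _ _ Hlim).
  reflexivity.
Qed.

Lemma Gamma_plus_INR x L : not_nonpos_int x -> Gamma (x + INR L) = poch x L * Gamma x.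
Proof.
  intros Hx; induction L as [|L IH]; [simpl; rewrite Rplus_0_r; ring|].
  rewrite S_INR, <- Rplus_assoc, Gamma_succ, IH by (apply not_nonpos_int_plus_INR, Hx).
  rewrite poch_S; ring.
Qed.

(** * Absolutely convergent series *)

Lemma ex_series_Rabs_le (a b : nat -> R) :
  (forall n, Rabs (a n) <= b n) -> ex_series b -> ex_series a.
Proof. apply (@ex_series_le R_AbsRing R_CompleteNormedModule). Qed.

Lemma is_series_iff_sum_f_R0 (a : nat -> R) l :
  is_series a l <-> is_lim_seq (fun N => sum_f_R0 a N) l.
Proof.
  split; intros H.
  - apply (is_lim_seq_ext (sum_n a)); [intros; apply sum_n_Reals|exact H].
  - apply (is_lim_seq_ext _ (sum_n a)) in H; [exact H|intros; symmetry; apply sum_n_Reals].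
Qed.

Lemma Series_tail a N : ex_series a -> Series a - sum_f_R0 a N = Series (fun k => a (S N + k)%nat).
Proof. intros Ha; rewrite (Series_incr_n a (S N)) by (lia || exact Ha); simpl pred; ring. Qed.

Lemma ex_series_tail (a : nat -> R) N : ex_series a -> ex_series (fun k => a (S N + k)%nat).
Proof. apply ex_series_incr_n. Qed.

Lemma is_series_tail_le (a e : nat -> R) l N :
  is_series a l -> (forall n, Rabs (a n) <= e n) -> ex_series e ->
  Rabs (l - sum_f_R0 a N) <= Series e - sum_f_R0 e N.
Proof.
  intros Hl Hae He.
  assert (Habs : ex_series (fun n => Rabs (a n))).
  { apply (ex_series_Rabs_le _ e); [intros n; rewrite Rabs_Rabsolu; apply Hae|exact He]. }
  rewrite <- (is_series_unique a l Hl), !Series_tail by (auto using ex_series_Rabs).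
  eapply Rle_trans; [apply Series_Rabs, (ex_series_tail (fun n => Rabs (a n)) N Habs)|].
  apply Series_le; [intros k; split; [apply Rabs_pos|apply Hae]|apply ex_series_tail, He].
Qed.

Lemma is_series_shift_zeros (u : nat -> R) (L : nat) (l : R) :
  (forall P, (P < L)%nat -> u P = 0) -> is_series (fun i => u (L + i)%nat) l -> is_series u l.
Proof.
  intros Hu Hl; destruct L as [|L]; [exact Hl|].
  apply (is_series_decr_n u (S L)); [lia|].
  rewrite sum_n_Reals, sum_eq_R0 by (intros; apply Hu; lia).
  unfold plus, opp; simpl; rewrite Ropp_0, Rplus_0_r; exact Hl.
Qed.

Definition majorant_term (a x : R) (P : nat) : R := Rabs x ^ P / (INR (fact P) * Rabs (poch a P)).

Section Majorant.

Variable a : R.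
Hypothesis Ha : not_nonpos_int a.

Lemma majorant_term_ge0 x P : 0 <= majorant_term a x P.
Proof.
  unfold majorant_term; pose proof (INR_fact_lt_0 P); pose proof (Rabs_pos_lt _ (poch_neq0 a P Ha)).
  apply Rmult_le_pos; [apply pow_le, Rabs_pos|].
  apply Rlt_le, Rinv_0_lt_compat, Rmult_lt_0_compat; lra.
Qed.

Lemma is_lim_seq_ratio_inv_fact_poch :
  is_lim_seq (fun P => Rabs (/ (INR (fact (S P)) * poch a (S P)) / / (INR (fact P) * poch a P))) 0.
Proof.
  assert (Hinf : is_lim_seq (fun P => INR (S P) * (a + INR P)) p_infty).
  { apply (is_lim_seq_mult _ _ p_infty p_infty); [| |reflexivity].
    - apply (is_lim_seq_incr_1 INR p_infty), is_lim_seq_INR.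
    - apply (is_lim_seq_plus _ _ a p_infty);
        [apply is_lim_seq_const|apply is_lim_seq_INR|reflexivity]. }
  apply (is_lim_seq_ext (fun P => Rabs (/ (INR (S P) * (a + INR P))))).
  - intros P; f_equal.
    pose proof (INR_fact_lt_0 P); pose proof (poch_neq0 a P Ha);
    pose proof (not_nonpos_int_neq0 a P Ha); pose proof (pos_INR P).
    rewrite fact_simpl, mult_INR, poch_S, S_INR; field; repeat split; lra.
  - replace (Finite 0) with (Rbar_abs (Rbar_inv p_infty)) by (simpl; rewrite Rabs_R0; reflexivity).
    apply is_lim_seq_abs, is_lim_seq_inv; [exact Hinf|discriminate].
Qed.

Lemma ex_series_majorant_term x : ex_series (majorant_term a x).
Proof.
  set (c := fun P => / (INR (fact P) * poch a P)).
  assert (Hc : forall P, c P <> 0).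
  { intros P; apply Rinv_neq_0_compat, Rmult_integral_contrapositive; split;
      [apply INR_fact_neq_0|apply poch_neq0, Ha]. }
  assert (Hr : CV_radius c = p_infty)
    by (apply CV_radius_infinite_DAlembert; [exact Hc|exact is_lim_seq_ratio_inv_fact_poch]).
  apply (ex_series_ext (fun P => Rabs (c P * x ^ P))).
  - intros P; unfold c, majorant_term.
    rewrite Rabs_mult, Rabs_inv, Rabs_mult, <- RPow_abs, (Rabs_pos_eq (INR (fact P)))
      by apply pos_INR.
    apply Rmult_comm.
  - apply CV_disk_inside; rewrite Hr; exact I.
Qed.

Lemma INR_S_le_pow2 n : INR (S n) <= 2 ^ n.
Proof.
  induction n as [|n IH]; [simpl; lra|].
  rewrite S_INR; cbn [pow]; pose proof (pow_R1_Rle 2 n ltac:(lra)); lra.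
Qed.

Lemma majorant_term_weight_le x P : INR (S P) * majorant_term a x P <= majorant_term a (2 * x) P.
Proof.
  replace (majorant_term a (2 * x) P) with (2 ^ P * majorant_term a x P).
  - apply Rmult_le_compat_r; [apply majorant_term_ge0|apply INR_S_le_pow2].
  - unfold majorant_term; rewrite Rabs_mult, (Rabs_pos_eq 2), Rpow_mult_distr by lra.
    unfold Rdiv; ring.
Qed.

End Majorant.

Lemma ex_series_weighted_majorant_term_conv a b x : not_nonpos_int a -> not_nonpos_int b ->
  ex_series (fun n =>
    INR (S n) * sum_f_R0 (fun P => majorant_term a x P * majorant_term b x (n - P)) n).
Proof.
  intros Ha Hb.
  set (u := majorant_term a (2 * x)); set (v := majorant_term b (2 * x)).
  assert (Hconv : ex_series (fun n => sum_f_R0 (fun P => u P * v (n - P)%nat) n)).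
  { eexists; apply is_series_mult_pos;
      try (apply Series_correct, ex_series_majorant_term; assumption);
      intros; apply majorant_term_ge0; assumption. }
  eapply ex_series_Rabs_le; [intros n|exact Hconv].
  rewrite Rabs_pos_eq, scal_sum.
  2:{ apply Rmult_le_pos; [apply pos_INR|apply cond_pos_sum; intros P].
      apply Rmult_le_pos; apply majorant_term_ge0; assumption. }
  apply sum_Rle; intros P HP.
  (* [n + 1 <= (P + 1) (n - P + 1)], and each weight is absorbed by doubling [x] *)
  assert (INR (S n) <= INR (S P) * INR (S (n - P))) by (rewrite <- mult_INR; apply le_INR; nia).
  pose proof (majorant_term_weight_le a Ha x P) as Hu.
  pose proof (majorant_term_weight_le b Hb x (n - P)) as Hv.
  pose proof (majorant_term_ge0 a Ha x P); pose proof (majorant_term_ge0 b Hb x (n - P)).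
  pose proof (pos_INR (S P)); pose proof (pos_INR (S (n - P))).
  set (ma := majorant_term a x P) in *; set (mb := majorant_term b x (n - P)) in *.
  apply Rle_trans with (INR (S P) * INR (S (n - P)) * (ma * mb)).
  - rewrite Rmult_comm; apply Rmult_le_compat_r; auto using Rmult_le_pos.
  - replace (INR (S P) * INR (S (n - P)) * (ma * mb))
      with (INR (S P) * ma * (INR (S (n - P)) * mb)) by ring.
    apply Rmult_le_compat; auto using Rmult_le_pos.
Qed.

Section TriangularArray.

Variables (c : nat -> nat -> R) (e r : nat -> R).
Hypothesis c_upper : forall L n, (n < L)%nat -> c L n = 0.
Hypothesis c_bounded : forall L n, Rabs (c L n) <= e n.
Hypothesis weighted_e_summable : ex_series (fun n => INR (S n) * e n).
Hypothesis row_sums : forall L, is_series (c L) (r L).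

Let e_ge0 n : 0 <= e n.
Proof. eapply Rle_trans; [apply Rabs_pos|apply (c_bounded 0%nat n)]. Qed.

Let e_summable : ex_series e.
Proof.
  eapply ex_series_Rabs_le; [intros n|exact weighted_e_summable].
  rewrite Rabs_pos_eq, S_INR by apply e_ge0.
  pose proof (pos_INR n); pose proof (e_ge0 n); nra.
Qed.

Let diagonal_summable : ex_series (fun n => sum_f_R0 (fun L => c L n) n).
Proof.
  eapply ex_series_Rabs_le; [intros n|exact weighted_e_summable].
  eapply Rle_trans; [apply sum_f_R0_triangle|].
  rewrite Rmult_comm, <- sum_cte; apply sum_Rle; intros; apply c_bounded.
Qed.

(* Each of the first [N + 1] rows is truncated after [N + 1] terms and so loses at most a tail
   of [e]; this is why [e] must stay summable when weighted by [n + 1]. *)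
Let truncation_error_le N :
  Rabs (sum_f_R0 r N - sum_f_R0 (fun n => sum_f_R0 (fun L => c L n) n) N)
  <= Series (fun n => INR (S n) * e n) - sum_f_R0 (fun n => INR (S n) * e n) N.
Proof.
  rewrite sum_f_R0_triangular_switch, <- minus_sum by exact c_upper.
  eapply Rle_trans; [apply sum_f_R0_triangle|].
  eapply Rle_trans; [apply sum_Rle; intros L _; apply (is_series_tail_le _ e), e_summable;
                     [apply row_sums|apply c_bounded]|].
  rewrite sum_cte, !Series_tail by (exact e_summable || exact weighted_e_summable).
  rewrite Rmult_comm, <- Series_scal_l.
  apply Series_le; [|apply (ex_series_tail (fun n => INR (S n) * e n)), weighted_e_summable].
  intros k; pose proof (e_ge0 (S N + k)); split; [apply Rmult_le_pos; [apply pos_INR|lra]|].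
  apply Rmult_le_compat_r; [lra|apply le_INR; lia].
Qed.

Lemma is_series_triangular_rows :
  is_series r (Series (fun n => sum_f_R0 (fun L => c L n) n)).
Proof.
  set (d := fun n => sum_f_R0 (fun L => c L n) n).
  set (f := fun n => INR (S n) * e n).
  assert (Htail : is_lim_seq (fun N => Series f - sum_f_R0 f N) 0).
  { replace (Finite 0) with (Finite (Series f - Series f)) by (f_equal; ring).
    apply is_lim_seq_minus'; [apply is_lim_seq_const|].
    apply is_series_iff_sum_f_R0, Series_correct, weighted_e_summable. }
  assert (Herr : is_lim_seq (fun N => sum_f_R0 r N - sum_f_R0 d N) 0).
  { apply is_lim_seq_abs_0, (is_lim_seq_le_le (fun _ => 0) _ (fun N => Series f - sum_f_R0 f N));
      [|apply is_lim_seq_const|exact Htail].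
    intros N; split; [apply Rabs_pos|apply truncation_error_le]. }
  apply is_series_iff_sum_f_R0.
  apply (is_lim_seq_ext (fun N => sum_f_R0 d N + (sum_f_R0 r N - sum_f_R0 d N))); [intros; ring|].
  replace (Series d) with (Series d + 0) by ring.
  apply is_lim_seq_plus'; [|exact Herr].
  apply is_series_iff_sum_f_R0, Series_correct, diagonal_summable.
Qed.

End TriangularArray.

(** * The 1F2 factors as power series *)

Definition F12 (L : nat) (a w : R) : R :=
  hypergeom (INR L + 1/2 :: nil) (2 * INR L + 1 :: INR L + a :: nil) w.

Definition F12_term (L : nat) (a w : R) : nat -> R :=
  hyp_term (INR L + 1/2 :: nil) (2 * INR L + 1 :: INR L + a :: nil) w.

Definition F12_pref (L : nat) (a w : R) : R := w ^ L / (4 ^ L * INR (fact L) * poch a L).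

(* The [P]-th term of [F12_pref L a w * F12 L a w] as a power series in [w]. *)
Definition F12_coef (L : nat) (a w : R) (P : nat) : R :=
  cbinom P L * (w / 4) ^ P / (INR (fact P) * poch a P).

Section F12.

Variables (L : nat) (a w : R).
Hypothesis Ha : not_nonpos_int a.

Let HLa : not_nonpos_int (INR L + a).
Proof. rewrite Rplus_comm; apply not_nonpos_int_plus_INR, Ha. Qed.

Lemma hyp_term_F12_abs_le i :
  Rabs (F12_term L a w i) <= majorant_term (INR L + a) w i.
Proof.
  pose proof (pos_INR L).
  pose proof (poch_gt0 (INR L + 1/2) i ltac:(lra)) as Hp.
  pose proof (poch_le (INR L + 1/2) (2 * INR L + 1) i ltac:(lra) ltac:(lra)) as Hle.
  pose proof (poch_neq0 _ i HLa); pose proof (INR_fact_lt_0 i).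
  unfold F12_term, hyp_term, poch_list, majorant_term; cbn [fold_right].
  replace (poch (INR L + 1 / 2) i * 1 / (poch (2 * INR L + 1) i * (poch (INR L + a) i * 1)) * w ^ i
           / INR (fact i))
    with ((poch (INR L + 1 / 2) i / poch (2 * INR L + 1) i)
          * (w ^ i / (INR (fact i) * poch (INR L + a) i)))
    by (field; repeat split; lra).
  rewrite Rabs_mult, (Rabs_pos_eq (_ / _)) by (apply Rlt_le, Rdiv_lt_0_compat; lra).
  rewrite <- (Rmult_1_l (Rabs w ^ i / _)); apply Rmult_le_compat; try apply Rabs_pos.
  - apply Rlt_le, Rdiv_lt_0_compat; lra.
  - apply (Rmult_le_reg_r (poch (2 * INR L + 1) i)); [lra|].
    replace (poch (INR L + 1/2) i / poch (2 * INR L + 1) i * poch (2 * INR L + 1) i)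
      with (poch (INR L + 1/2) i) by (field; lra); lra.
  - unfold Rdiv; rewrite Rabs_mult, Rabs_inv, Rabs_mult, <- RPow_abs, (Rabs_pos_eq (INR (fact i)));
      [apply Rle_refl|lra].
Qed.

Lemma is_series_F12 : is_series (F12_term L a w) (F12 L a w).
Proof.
  apply Series_correct, ex_series_Rabs.
  apply (ex_series_Rabs_le _ (majorant_term (INR L + a) w)); [|apply ex_series_majorant_term, HLa].
  intros i; rewrite Rabs_Rabsolu; apply hyp_term_F12_abs_le.
Qed.

Lemma F12_coef_lt P : (P < L)%nat -> F12_coef L a w P = 0.
Proof. intros HP; unfold F12_coef; rewrite cbinom_gt by exact HP; unfold Rdiv; ring. Qed.

Lemma F12_coef_abs_le P : Rabs (F12_coef L a w P) <= majorant_term a w P.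
Proof.
  pose proof (cbinom_ge0 P L); pose proof (cbinom_le_pow4 P L); pose proof (pow_lt 4 P ltac:(lra)).
  pose proof (INR_fact_lt_0 P); pose proof (Rabs_pos_lt _ (poch_neq0 a P Ha)).
  replace (Rabs (F12_coef L a w P)) with (cbinom P L / 4 ^ P * majorant_term a w P).
  - rewrite <- (Rmult_1_l (majorant_term a w P)) at 2.
    apply Rmult_le_compat_r; [apply majorant_term_ge0, Ha|].
    apply (Rmult_le_reg_r (4 ^ P)); [lra|]; unfold Rdiv; rewrite Rmult_assoc, Rinv_l; lra.
  - unfold F12_coef, majorant_term, Rdiv.
    rewrite !Rabs_mult, Rabs_inv, Rabs_mult, <- RPow_abs, Rabs_mult, Rabs_inv,
      (Rabs_pos_eq (cbinom P L)), (Rabs_pos_eq (INR (fact P))), (Rabs_pos_eq 4) by lra.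
    rewrite Rpow_mult_distr, pow_inv; field; repeat split; lra.
Qed.

Lemma F12_coef_shift i :
  F12_coef L a w (L + i)
  = F12_pref L a w * F12_term L a w i.
Proof.
  unfold F12_coef, F12_pref, F12_term, hyp_term, poch_list, cbinom; cbn [fold_right].
  rewrite gbinom_nat by lia; unfold Binomial.C.
  replace (L + i + L)%nat with (2 * L + i)%nat by lia.
  replace (2 * (L + i) - (2 * L + i))%nat with i by lia.
  pose proof (poch_half_fact (L + i)) as Hhalf; rewrite poch_add, pow_add in Hhalf.
  pose proof (poch_half_fact L) as HhalfL.
  pose proof (fact_add_poch (2 * L) i) as Hfact.
  replace (INR (2 * L)) with (2 * INR L) in Hfact by (rewrite mult_INR; simpl; ring).
  rewrite poch_add, (Rplus_comm a (INR L)).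
  replace (1 / 2 + INR L) with (INR L + 1/2) in Hhalf by ring.
  pose proof (INR_fact_lt_0 L); pose proof (INR_fact_lt_0 i); pose proof (INR_fact_lt_0 (L + i)).
  pose proof (INR_fact_lt_0 (2 * L)); pose proof (INR_fact_lt_0 (2 * L + i)).
  pose proof (poch_neq0 a L Ha); pose proof (poch_neq0 _ i HLa).
  pose proof (poch_gt0 (1/2) L ltac:(lra)).
  pose proof (poch_gt0 (2 * INR L + 1) i ltac:(pose proof (pos_INR L); lra)).
  pose proof (pow_lt 4 L ltac:(lra)); pose proof (pow_lt 4 i ltac:(lra)).
  assert (Ehalf : poch (INR L + 1/2) i
          = INR (fact (2 * (L + i))) * INR (fact L)
            / (INR (fact (2 * L)) * 4 ^ i * INR (fact (L + i)))).
  { rewrite <- Hhalf, <- HhalfL; field; repeat split; lra. }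
  assert (Epoch : poch (2 * INR L + 1) i = INR (fact (2 * L + i)) / INR (fact (2 * L))).
  { rewrite Hfact; field; lra. }
  rewrite Ehalf, Epoch; unfold Rdiv.
  rewrite Rpow_mult_distr, pow_add, pow_add, pow_inv, pow_inv.
  field; repeat split; lra.
Qed.

Lemma is_series_F12_coef : is_series (F12_coef L a w) (F12_pref L a w * F12 L a w).
Proof.
  apply (is_series_shift_zeros _ L); [exact F12_coef_lt|].
  apply (is_series_ext (fun i => F12_pref L a w * F12_term L a w i));
    [intros i; symmetry; apply F12_coef_shift|].
  apply (@is_series_scal_l R_AbsRing R_NormedModule), is_series_F12.
Qed.

End F12.

(** * Coefficients of the summands *)

Definition summand_coef (L : nat) (a b w : R) (n : nat) : R :=
  (2 - delta0 L) * sum_f_R0 (fun P => F12_coef L a w P * F12_coef L b w (n - P)) n.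

Definition summand_majorant (a b w : R) (n : nat) : R :=
  2 * sum_f_R0 (fun P => majorant_term a w P * majorant_term b w (n - P)) n.

Lemma hyp_term_3F4 a b w n :
  not_nonpos_int a -> not_nonpos_int b -> not_nonpos_int (a + b - 1) ->
  hyp_term (1/2 :: (a + b - 1)/2 :: (a + b)/2 :: nil) (1 :: a :: b :: a + b - 1 :: nil) (4 * w) n
  = gbinom (INR (2 * n)) n * (w / 4) ^ n
    * (poch (a + b + INR n - 1) n / (INR (fact n) * poch a n * poch b n)).
Proof.
  intros Ha Hb Hc.
  unfold hyp_term, poch_list; cbn [fold_right].
  rewrite gbinom_nat by lia; unfold Binomial.C; replace (2 * n - n)%nat with n by lia.
  pose proof (poch_duplication ((a + b - 1) / 2) n) as Hdup.
  replace ((a + b - 1) / 2 + 1/2) with ((a + b) / 2) in Hdup by field.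
  replace (2 * ((a + b - 1) / 2)) with (a + b - 1) in Hdup by field.
  replace (2 * n)%nat with (n + n)%nat in Hdup by lia; rewrite poch_add in Hdup.
  pose proof (poch_half_fact n) as Hhalf.
  replace (a + b - 1 + INR n) with (a + b + INR n - 1) in Hdup by ring.
  pose proof (INR_fact_lt_0 n); pose proof (pow_lt 4 n ltac:(lra)).
  pose proof (poch_neq0 a n Ha); pose proof (poch_neq0 b n Hb); pose proof (poch_neq0 _ n Hc).
  rewrite poch_1, <- Hhalf.
  assert (Epair : poch ((a + b - 1) / 2) n * poch ((a + b) / 2) n
                  = poch (a + b - 1) n * poch (a + b + INR n - 1) n / 4 ^ n)
    by (rewrite <- Hdup; field; lra).
  transitivity (poch (1/2) n * (poch ((a + b - 1) / 2) n * poch ((a + b) / 2) n)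
                / (INR (fact n) * poch a n * poch b n * poch (a + b - 1) n) * (4 * w) ^ n
                / INR (fact n)); [field; repeat split; lra|].
  replace ((w / 4) ^ n) with (w ^ n / 4 ^ n)
    by (unfold Rdiv; rewrite Rpow_mult_distr, pow_inv; reflexivity).
  rewrite Epair, Rpow_mult_distr; field; repeat split; lra.
Qed.

Section SummandCoefficients.

Variables (a b w : R).
Hypotheses (Ha : not_nonpos_int a) (Hb : not_nonpos_int b).

Lemma is_series_summand_coef L :
  is_series (summand_coef L a b w)
    ((2 - delta0 L) * (F12_pref L a w * F12 L a w) * (F12_pref L b w * F12 L b w)).
Proof.
  assert (Habs : forall c, not_nonpos_int c -> ex_series (fun P => Rabs (F12_coef L c w P))).
  { intros c Hc; apply (ex_series_Rabs_le _ (majorant_term c w));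
      [|apply ex_series_majorant_term, Hc].
    intros P; rewrite Rabs_Rabsolu; apply F12_coef_abs_le, Hc. }
  rewrite Rmult_assoc.
  apply (@is_series_scal_l R_AbsRing R_NormedModule).
  apply is_series_mult; auto using is_series_F12_coef.
Qed.

Lemma summand_coef_lt L n : (n < L)%nat -> summand_coef L a b w n = 0.
Proof.
  intros Hn; unfold summand_coef; rewrite sum_eq_R0; [ring|].
  intros P HP; rewrite F12_coef_lt by lia; ring.
Qed.

Lemma summand_coef_abs_le L n : Rabs (summand_coef L a b w n) <= summand_majorant a b w n.
Proof.
  unfold summand_coef, summand_majorant; rewrite Rabs_mult.
  apply Rmult_le_compat; try apply Rabs_pos.
  - destruct L; simpl; rewrite Rabs_pos_eq; lra.
  - eapply Rle_trans; [apply sum_f_R0_triangle|]; apply sum_Rle; intros P _.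
    rewrite Rabs_mult; apply Rmult_le_compat; try apply Rabs_pos; apply F12_coef_abs_le; assumption.
Qed.

Lemma ex_series_weighted_summand_majorant :
  ex_series (fun n => INR (S n) * summand_majorant a b w n).
Proof.
  set (conv := fun n => sum_f_R0 (fun P => majorant_term a w P * majorant_term b w (n - P)) n).
  assert (E : forall n, 2 * (INR (S n) * conv n) = INR (S n) * summand_majorant a b w n)
    by (intros; unfold summand_majorant; fold (conv n); ring).
  apply (ex_series_ext _ _ E), (@ex_series_scal_l R_AbsRing R_NormedModule 2).
  apply ex_series_weighted_majorant_term_conv; assumption.
Qed.

Lemma sum_summand_coef n : not_nonpos_int (a + b - 1) ->
  sum_f_R0 (fun L => summand_coef L a b w n) n
  = hyp_term (1/2 :: (a + b - 1)/2 :: (a + b)/2 :: nil) (1 :: a :: b :: a + b - 1 :: nil) (4 * w) n.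
Proof.
  intros Hc; rewrite hyp_term_3F4, <- sum_inv_fact_poch by assumption.
  set (T := fun P => (w / 4) ^ n / (INR (fact P) * poch a P * INR (fact (n - P)) * poch b (n - P))).
  transitivity (sum_f_R0 (fun L => sum_f_R0 (fun P =>
                  (2 - delta0 L) * (cbinom P L * cbinom (n - P) L) * T P) n) n).
  { apply sum_eq; intros L _; unfold summand_coef; rewrite scal_sum; apply sum_eq; intros P HP.
    unfold F12_coef, T.
    replace ((w / 4) ^ n) with ((w / 4) ^ P * (w / 4) ^ (n - P))
      by (rewrite <- pow_add; f_equal; lia).
    pose proof (INR_fact_lt_0 P); pose proof (INR_fact_lt_0 (n - P)).
    pose proof (poch_neq0 a P Ha); pose proof (poch_neq0 b (n - P) Hb).
    field; repeat split; lra. }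
  rewrite sum_f_R0_switch, scal_sum; apply sum_eq; intros P HP.
  rewrite <- scal_sum.
  assert (Hconv : sum_f_R0 (fun L => (2 - delta0 L) * (cbinom P L * cbinom (n - P) L)) n
                  = gbinom (INR (2 * n)) n).
  { pose proof (cbinom_convolution P (n - P)) as E; replace (n - P + P)%nat with n in E by lia.
    exact E. }
  rewrite Hconv; unfold T, Rdiv; ring.
Qed.

Lemma hypergeom_3F4_Series : not_nonpos_int (a + b - 1) ->
  hypergeom (1/2 :: (a + b - 1)/2 :: (a + b)/2 :: nil) (1 :: a :: b :: a + b - 1 :: nil) (4 * w)
  = Series (fun n => sum_f_R0 (fun L => summand_coef L a b w n) n).
Proof.
  intros Hc; unfold hypergeom; apply Series_ext; intros n; symmetry.
  apply sum_summand_coef, Hc.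
Qed.

End SummandCoefficients.

Lemma Rpower_2_cancel mu nu L :
  Rpower 2 (mu + nu) * Rpower 2 (- 8 * INR L - mu - nu) = / (4 ^ L * 4 ^ L * 16 ^ L).
Proof.
  rewrite <- Rpower_plus.
  replace (mu + nu + (- 8 * INR L - mu - nu)) with (- INR (8 * L))
    by (rewrite mult_INR; simpl; ring).
  rewrite Rpower_Ropp, Rpower_pow by lra; f_equal.
  rewrite <- !Rpow_mult_distr, pow_mult; f_equal; ring.
Qed.

Lemma summand_eq_F12 k mu nu L :
  not_nonpos_int (mu + 1) -> not_nonpos_int (nu + 1) ->
  Rpower 2 (mu + nu) * Gamma (mu + 1) * Gamma (nu + 1) *
       ((-1) ^ (2 * L) * k ^ (4 * L) * Rpower 2 (- 8 * INR L - mu - nu)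
          * (2 - delta0 L)
        / ((INR (fact L)) ^ 2 * Gamma (INR L + mu + 1) * Gamma (INR L + nu + 1))
        * hypergeom (INR L + 1/2 :: nil) (2 * INR L + 1 :: INR L + mu + 1 :: nil) (- k ^ 2 / 4)
        * hypergeom (INR L + 1/2 :: nil) (2 * INR L + 1 :: INR L + nu + 1 :: nil) (- k ^ 2 / 4))
  = (2 - delta0 L) * (F12_pref L (mu + 1) (- k ^ 2 / 4) * F12 L (mu + 1) (- k ^ 2 / 4))
    * (F12_pref L (nu + 1) (- k ^ 2 / 4) * F12 L (nu + 1) (- k ^ 2 / 4)).
Proof.
  intros Hmu Hnu.
  assert (Gmu : Gamma (INR L + mu + 1) = poch (mu + 1) L * Gamma (mu + 1))
    by (rewrite <- Gamma_plus_INR by exact Hmu; f_equal; ring).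
  assert (Gnu : Gamma (INR L + nu + 1) = poch (nu + 1) L * Gamma (nu + 1))
    by (rewrite <- Gamma_plus_INR by exact Hnu; f_equal; ring).
  rewrite Gmu, Gnu, !Rplus_assoc.
  fold (F12 L (mu + 1) (- k ^ 2 / 4)) (F12 L (nu + 1) (- k ^ 2 / 4)).
  set (Fa := F12 L (mu + 1) _); set (Fb := F12 L (nu + 1) _).
  assert (Hk : (- k ^ 2 / 4) ^ L * (- k ^ 2 / 4) ^ L = k ^ (4 * L) / 16 ^ L).
  { rewrite <- Rpow_mult_distr, pow_mult; unfold Rdiv; rewrite <- pow_inv, <- Rpow_mult_distr.
    f_equal; field. }
  rewrite pow_mult; replace ((-1) ^ 2) with 1 by ring; rewrite pow1.
  pose proof (Rpower_2_cancel mu nu L) as Hpow.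
  pose proof (Gamma_neq0 _ Hmu); pose proof (Gamma_neq0 _ Hnu).
  pose proof (poch_neq0 _ L Hmu); pose proof (poch_neq0 _ L Hnu); pose proof (INR_fact_lt_0 L).
  pose proof (pow_lt 4 L ltac:(lra)); pose proof (pow_lt 16 L ltac:(lra)).
  assert (0 < Rpower 2 (mu + nu)) by apply exp_pos.
  replace (Rpower 2 (- 8 * INR L - mu - nu)) with (/ (4 ^ L * 4 ^ L * 16 ^ L) / Rpower 2 (mu + nu))
    by (rewrite <- Hpow; field; lra).
  unfold F12_pref.
  transitivity ((2 - delta0 L) * ((- k ^ 2 / 4) ^ L * (- k ^ 2 / 4) ^ L)
                / (4 ^ L * 4 ^ L * INR (fact L) ^ 2 * poch (mu + 1) L * poch (nu + 1) L) * Fa * Fb).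
  - rewrite Hk; field; repeat split; lra.
  - field; repeat split; lra.
Qed.

Theorem theorem2 (k mu nu : R)
  (Hmu : not_nonpos_int (mu + 1)) (Hnu : not_nonpos_int (nu + 1))
  (Hmunu : not_nonpos_int (mu + nu + 1)) :
  is_series
    (fun L : nat =>
       Rpower 2 (mu + nu) * Gamma (mu + 1) * Gamma (nu + 1) *
       ((-1) ^ (2 * L) * k ^ (4 * L) * Rpower 2 (- 8 * INR L - mu - nu)
          * (2 - delta0 L)
        / ((INR (fact L)) ^ 2 * Gamma (INR L + mu + 1) * Gamma (INR L + nu + 1))
        * hypergeom (INR L + 1/2 :: nil) (2 * INR L + 1 :: INR L + mu + 1 :: nil) (- k ^ 2 / 4)
        * hypergeom (INR L + 1/2 :: nil) (2 * INR L + 1 :: INR L + nu + 1 :: nil) (- k ^ 2 / 4)))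
    (hypergeom (1/2 :: mu/2 + nu/2 + 1/2 :: mu/2 + nu/2 + 1 :: nil)
               (1 :: mu + 1 :: nu + 1 :: mu + nu + 1 :: nil) (- k ^ 2)).
Proof.
  set (w := - k ^ 2 / 4).
  replace (mu / 2 + nu / 2 + 1 / 2) with ((mu + 1 + (nu + 1) - 1) / 2) by field.
  replace (mu / 2 + nu / 2 + 1) with ((mu + 1 + (nu + 1)) / 2) by field.
  replace (mu + nu + 1) with (mu + 1 + (nu + 1) - 1) in Hmunu |- * by ring.
  replace (- k ^ 2) with (4 * w) by (unfold w; field).
  rewrite hypergeom_3F4_Series by assumption.
  eapply is_series_ext; [intros L; symmetry; apply summand_eq_F12; assumption|].
  apply (is_series_triangular_rows _ (summand_majorant (mu + 1) (nu + 1) w)).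
  - intros L n; apply summand_coef_lt.
  - intros L n; apply summand_coef_abs_le; assumption.
  - apply ex_series_weighted_summand_majorant; assumption.
  - intros L; apply is_series_summand_coef; assumption.
Qed.
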